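(* For $n\ge 3$, \begin{align*} (\underbrace{\mathfrak C_0+\cdots+\mathfrak C_0}_{7})^n&=\binom{2n-1}{6}\mathfrak C_{2n}+\frac{12n^2-60n+83}{15}\binom{2n}{2}\binom{2n-3}{4}\mathfrak C_{2n-2}\\ &\quad+\frac{(4n^2-24n+39)(12n^2-72n+109)}{15}\binom{2n}{4}\binom{2n-5}{2}\mathfrak C_{2n-4}+\binom{2n}{6}(2n-7)^6\mathfrak C_{2n-6}. \end{align*}
   Context: The numbers $\mathfrak C_{2n}$ (Cauchy numbers with level $2$) are defined by $\frac{t}{{\rm arcsinh}\,t}=\sum_{n=0}^\infty\mathfrak C_{2n}\frac{t^{2n}}{(2n)!}$. Convolution notation: $(\mathfrak C_{2j_1}+\cdots+\mathfrak C_{2j_k})^n:=\sum_{i_1+\cdots+i_k=n,\ i_1,\dots,i_k\ge0}\frac{(2n)!}{(2i_1)!\cdots(2i_k)!}\mathfrak C_{2i_1+2j_1}\cdots\mathfrak C_{2i_k+2j_k}$ (here with $k=7$ summands, all $j_i=0$). *)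

From mathcomp Require Import all_boot all_order all_algebra.
Set Implicit Arguments. Unset Strict Implicit. Unset Printing Implicit Defensive.
Import Order.TTheory GRing.Theory Num.Theory.
Local Open Scope ring_scope.

(* Maclaurin coefficients of arcsinh:
   arcsinh t = sum_k (-1)^k (2k)! / (4^k (k!)^2 (2k+1)) t^(2k+1),
   so arcsinh t / t = sum_k asinh_coef k * t^(2k). *)
Definition asinh_coef (k : nat) : rat :=
  (-1) ^+ k * ((2 * k)`!)%:R / ((4 ^ k * (k`!) ^ 2 * (2 * k + 1))%N)%:R.

(* Coefficients b_n of the formal power series t / arcsinh t in x = t^2,
   i.e. the formal inverse of sum_k asinh_coef k x^k:
   b_0 = 1/a_0 = 1, b_n = - sum_{k=1}^n a_k b_{n-k}. *)
Fixpoint inv_coef_aux (fuel n : nat) : rat :=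
  match fuel with
  | 0 => 0
  | S f =>
    if n is 0 then 1
    else - \sum_(k < n) asinh_coef (n - k) * inv_coef_aux f k
  end.

Definition inv_coef (n : nat) : rat := inv_coef_aux n.+1 n.

(* Cauchy numbers of level 2: t / arcsinh t = sum_n C2 n * t^(2n) / (2n)!.
   C2 n stands for \mathfrak C_{2n}. *)
Definition C2 (n : nat) : rat := ((2 * n)`!)%:R * inv_coef n.

(* Convolution (C_{2j_1} + ... + C_{2j_k})^n with all j_i = 0:
   sum over i_1+...+i_k = n of (2n)!/((2i_1)!...(2i_k)!) C_{2i_1}...C_{2i_k}. *)
Definition conv_pow (k n : nat) : rat :=
  \sum_(i : {ffun 'I_k -> 'I_n.+1} | (\sum_(j < k) (i j : nat))%N == n)
    ((2 * n)`!)%:R / (\prod_(j < k) ((2 * i j)`!)%:R)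
      * \prod_(j < k) C2 (i j).

From HB Require Import structures.
From mathcomp Require Import all_boot all_order all_algebra.
From mathcomp Require Import ring lra zify.
Set Implicit Arguments. Unset Strict Implicit. Unset Printing Implicit Defensive.
Import Order.TTheory GRing.Theory Num.Theory.
Local Open Scope ring_scope.

(* Write x = t^2 and theta = x d/dx, so that 2 theta = t d/dt, and let
   g = t / arcsinh t, A = arcsinh t / t and B = d/dt arcsinh t = A + 2 theta A
   as power series in x; then conv_pow k n = (2n)! [x^n] g^k.  From g A = 1,
   B^2 (1 + x) = 1 and 2 (1 + x) theta B + x B = 0 one gets
   theta g = - g^2 theta A, hence (m - 2 theta) g^m = m g^(m+1) B, and the
   second-order operator Q_m = cauchy_op m satisfies Q_m g^m = m (m+1) g^(m+2).
   Thus 6! g^7 = Q_5 Q_3 Q_1 g, and Q_m acts on coefficients by a two-term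
   recurrence, so [x^n] g^7 is an explicit combination of the coefficients of g
   of degrees n, n-1, n-2, n-3.  The series are truncated at degree N, all
   identities holding modulo x^(N+1). *)

Section EulerOperator.
Variable R : comNzRingType.
Implicit Types p q : {poly R}.

Definition eulerD p := p^`() * 'X.

Lemma coef_eulerD p i : (eulerD p)`_i = p`_i *+ i.
Proof. by rewrite /eulerD coefMX; case: i => [|i] //=; rewrite coef_deriv. Qed.

Fact eulerD_is_semilinear : semilinear eulerD.
Proof. by split=> [k p | p q]; rewrite /eulerD (derivZ, derivD) (scalerAl, mulrDl). Qed.
HB.instance Definition _ :=
  GRing.isSemilinear.Build R {poly R} {poly R} _ eulerD eulerD_is_semilinear.

Lemma eulerDM p q : eulerD (p * q) = eulerD p * q + p * eulerD q.
Proof. by rewrite /eulerD derivM; ring. Qed.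

Lemma eulerDC c : eulerD c%:P = 0.
Proof. by rewrite /eulerD derivC mul0r. Qed.

Lemma eulerD1 : eulerD 1 = 0.
Proof. by rewrite -polyC1 eulerDC. Qed.

Lemma eulerDX : eulerD 'X = 'X.
Proof. by rewrite /eulerD derivX mul1r. Qed.

Lemma eulerD_exp p k : eulerD (p ^+ k) = p ^+ k.-1 * eulerD p *+ k.
Proof. by rewrite /eulerD deriv_exp; ring. Qed.

End EulerOperator.

Lemma dvdXnP (R : idomainType) n (p : {poly R}) :
  reflect (forall i, (i < n)%N -> p`_i = 0) ('X^n %| p).
Proof.
apply: (iffP (Pdiv.IdomainMonic.dvdpP (monicXn R n) p)) => [[q ->] i lt_in | p_low].
  by rewrite coefMXn lt_in.
exists (drop_poly n p); rewrite -[LHS](poly_take_drop n p).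
suff -> : take_poly n p = 0 by rewrite add0r.
by apply/polyP => i; rewrite coef_take_poly coef0; case: ltnP => // /p_low.
Qed.

Lemma dvdXn_eulerD (R : idomainType) n (p : {poly R}) :
  'X^n %| p -> 'X^n %| eulerD p.
Proof. by move/dvdXnP=> p_low; apply/dvdXnP=> i lt_in; rewrite coef_eulerD p_low ?mul0rn. Qed.

Lemma eulerD_dvdXn (R : numDomainType) n (p : {poly R}) :
  p`_0 = 0 -> 'X^n %| eulerD p -> 'X^n %| p.
Proof.
move=> p0 /dvdXnP Dp_low; apply/dvdXnP => -[|i] lt_in //.
by apply/eqP; have /eqP := Dp_low _ lt_in; rewrite coef_eulerD mulrn_eq0.
Qed.

Lemma dvdp_sub_trans (R : idomainType) (d p q r : {poly R}) :
  d %| p - q -> d %| q - r -> d %| p - r.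
Proof. by move=> dpq dqr; rewrite -[p](subrK q) -addrA dvdp_add. Qed.

Lemma dvdp_mulrn (R : idomainType) (d p : {poly R}) k : d %| p -> d %| p *+ k.
Proof. by move=> dp; rewrite -mulr_natl dvdp_mull. Qed.

Section CauchyOperator.
Variable R : comNzRingType.
Implicit Types p Y : {poly R}.

Definition euler_shift m p := p *+ m - eulerD p *+ 2.

Definition cauchy_raise m Y := Y *+ m.+1 + 'X * Y *+ m - (1 + 'X) * eulerD Y *+ 2.

Definition cauchy_op m p := cauchy_raise m (euler_shift m p).

Fact euler_shift_is_zmod_morphism m : zmod_morphism (euler_shift m).
Proof. by move=> p q; rewrite /euler_shift !raddfB /=; ring. Qed.
HB.instance Definition _ m := GRing.isZmodMorphism.Build {poly R} {poly R}
  (euler_shift m) (euler_shift_is_zmod_morphism m).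

Fact cauchy_raise_is_zmod_morphism m : zmod_morphism (cauchy_raise m).
Proof. by move=> p q; rewrite /cauchy_raise !raddfB /=; ring. Qed.
HB.instance Definition _ m := GRing.isZmodMorphism.Build {poly R} {poly R}
  (cauchy_raise m) (cauchy_raise_is_zmod_morphism m).

Fact cauchy_op_is_zmod_morphism m : zmod_morphism (cauchy_op m).
Proof.
by move=> p q; rewrite /cauchy_op (raddfB (euler_shift m)) (raddfB (cauchy_raise m)).
Qed.
HB.instance Definition _ m := GRing.isZmodMorphism.Build {poly R} {poly R}
  (cauchy_op m) (cauchy_op_is_zmod_morphism m).

Lemma coef_cauchy_op m p i : (cauchy_op m p)`_i.+1 =
  (m.+1%:R - 2 * i.+1%:R) * (m%:R - 2 * i.+1%:R) * p`_i.+1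
  + (m%:R - 2 * i%:R) ^+ 2 * p`_i.
Proof.
rewrite /cauchy_op /cauchy_raise /euler_shift mulrDl mul1r.
rewrite (raddfB (@eulerD R)) !(raddfMn (@eulerD R)).
rewrite !(coefD, coefN, coefB, coefMn, coefXM, coef_eulerD) /=.
rewrite -natr1; ring.
Qed.

Fixpoint cauchy_iter r p :=
  if r is r'.+1 then cauchy_op r'.*2.+1 (cauchy_iter r' p) else p.

End CauchyOperator.

Section CauchyOperatorDvdXn.
Variables (R : idomainType) (n m : nat).
Implicit Types p Y : {poly R}.

Lemma dvdXn_euler_shift p : 'X^n %| p -> 'X^n %| euler_shift m p.
Proof.
by move=> Xn_p; rewrite /euler_shift dvdp_sub ?dvdp_mulrn ?dvdXn_eulerD.
Qed.

Lemma dvdXn_cauchy_raise Y : 'X^n %| Y -> 'X^n %| cauchy_raise m Y.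
Proof.
move=> Xn_Y; apply: dvdp_sub; first apply: dvdp_add; apply: dvdp_mulrn.
- exact: Xn_Y.
- exact: dvdp_mull.
- exact/dvdp_mull/dvdXn_eulerD.
Qed.

Lemma dvdXn_cauchy_op p : 'X^n %| p -> 'X^n %| cauchy_op m p.
Proof. by move=> Xn_p; apply/dvdXn_cauchy_raise/dvdXn_euler_shift. Qed.

End CauchyOperatorDvdXn.

Lemma asinh_coef0 : asinh_coef 0 = 1.
Proof. by rewrite /asinh_coef expr0 mul1r muln0 fact0. Qed.

Lemma asinh_coefS k : asinh_coef k.+1 * ((2 * k%:R + 2) * (2 * k%:R + 3)) =
  - (2 * k%:R + 1) ^+ 2 * asinh_coef k.
Proof.
set x := k%:R; have x_ge0 : 0 <= x := ler0n _ _.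
have factk : (k`!)%:R != 0 :> rat by rewrite pnatr_eq0 -lt0n fact_gt0.
rewrite /asinh_coef (_ : (2 * k.+1 = (2 * k).+2)%N) ?factS; last by lia.
rewrite exprS expnS -[(2 * k).+2]addn2 -[(2 * k).+1]addn1 -[k.+1]addn1.
rewrite !(natrM, natrX, natrD) -/x.
field; rewrite factk expf_neq0 //= -/x.
by apply/and3P; split; rewrite gt_eqF //; lra.
Qed.

Lemma inv_coef_auxE f j : (j < f)%N -> inv_coef_aux f j = inv_coef j.
Proof.
rewrite /inv_coef; elim/ltn_ind: j f => j IHj [|f] // lt_jf /=.
case: j IHj lt_jf => [|j] IHj lt_jf //; congr (- _); apply: eq_bigr => k _.
have lt_kj := ltn_ord k.
by rewrite (IHj k) ?(IHj k lt_kj j.+1) //; lia.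
Qed.

Lemma inv_coef0 : inv_coef 0 = 1.
Proof. by []. Qed.

Lemma inv_coefS k :
  inv_coef k.+1 = - \sum_(j < k.+1) asinh_coef (k.+1 - j) * inv_coef j.
Proof.
have -> : inv_coef k.+1 =
  - \sum_(j < k.+1) asinh_coef (k.+1 - j) * inv_coef_aux k.+1 j by [].
by congr (- _); apply: eq_bigr => j _; rewrite inv_coef_auxE.
Qed.

Section TruncatedSeries.
Variable N : nat.

Definition asinh_poly : {poly rat} := \poly_(k < N.+1) asinh_coef k.
Definition cauchy_poly : {poly rat} := \poly_(k < N.+1) inv_coef k.
Definition dasinh_poly := asinh_poly + eulerD asinh_poly *+ 2.

Local Notation A := asinh_poly.
Local Notation g := cauchy_poly.
Local Notation B := dasinh_poly.

Lemma coef_asinh_poly i : (i <= N)%N -> A`_i = asinh_coef i.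
Proof. by move=> le_iN; rewrite coef_poly ltnS le_iN. Qed.

Lemma coef_cauchy_poly i : (i <= N)%N -> g`_i = inv_coef i.
Proof. by move=> le_iN; rewrite coef_poly ltnS le_iN. Qed.

Lemma coef_dasinh_poly i : (i <= N)%N -> B`_i = asinh_coef i * (2 * i%:R + 1).
Proof. by move=> le_iN; rewrite coefD coefMn coef_eulerD coef_asinh_poly //; ring. Qed.

Lemma cauchy_asinh_poly : 'X^(N.+1) %| g * A - 1.
Proof.
apply/dvdXnP => i; rewrite ltnS coefB coef1 coefM => le_iN.
rewrite (eq_bigr (fun j : 'I_i.+1 => asinh_coef (i - j) * inv_coef j)) => [|j _].
  case: i le_iN => [|k] _; first by rewrite big_ord1 asinh_coef0 inv_coef0 mulr1 subrr.
  by rewrite big_ord_recr /= subnn asinh_coef0 mul1r inv_coefS subrr subr0.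
have lt_ji := ltn_ord j; rewrite mulrC coef_cauchy_poly ?coef_asinh_poly //; lia.
Qed.

Lemma dasinh_poly_ode : 'X^(N.+1) %| (1 + 'X) * eulerD B *+ 2 + 'X * B.
Proof.
apply/dvdXnP => -[|k] lt_kN; rewrite mulrDl mul1r !(coefD, coefMn, coefXM, coef_eulerD) /=.
  by rewrite !mulr0n add0r.
have /eqP := asinh_coefS k; rewrite -subr_eq0 => /eqP rec.
have le_kN : (k <= N)%N := ltnW lt_kN.
by rewrite !coef_asinh_poly // -[X in _ = X]rec -natr1; ring.
Qed.

Lemma dasinh_poly_sqr : 'X^(N.+1) %| B ^+ 2 * (1 + 'X) - 1.
Proof.
apply: eulerD_dvdXn.
  rewrite coefB coef1 !coef0M coef_dasinh_poly // coefD coef1 coefX asinh_coef0 /=.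
  by ring.
have -> : eulerD (B ^+ 2 * (1 + 'X) - 1) = B * ((1 + 'X) * eulerD B *+ 2 + 'X * B).
  by rewrite raddfB /= eulerDM raddfD /= eulerD1 eulerDX eulerD_exp; ring.
exact/dvdp_mull/dasinh_poly_ode.
Qed.

Lemma eulerD_cauchy_poly : 'X^(N.+1) %| eulerD g + g ^+ 2 * eulerD A.
Proof.
have := dvdXn_eulerD cauchy_asinh_poly; rewrite raddfB /= eulerD1 subr0 eulerDM => DgA.
rewrite (_ : _ + _ = g * (eulerD g * A + g * eulerD A) - eulerD g * (g * A - 1)).
  by apply: dvdp_sub; apply: dvdp_mull; [apply: DgA | apply: cauchy_asinh_poly].
by ring.
Qed.

Lemma eulerD_cauchy_poly_exp k :
  'X^(N.+1) %| eulerD (g ^+ k) + g ^+ k.+1 * eulerD A *+ k.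
Proof.
case: k => [|k]; first by rewrite expr0 eulerD1 !mulr0n addr0 dvdp0.
rewrite eulerD_exp (_ : _ + _ = g ^+ k *+ k.+1 * (eulerD g + g ^+ 2 * eulerD A)).
  exact/dvdp_mull/eulerD_cauchy_poly.
by rewrite !exprS; ring.
Qed.

Lemma euler_shift_cauchy_pow m :
  'X^(N.+1) %| euler_shift m (g ^+ m) - g ^+ m.+1 * B *+ m.
Proof.
rewrite (_ : _ - _ = - (g ^+ m *+ m) * (g * A - 1)
    - 2%:R * (eulerD (g ^+ m) + g ^+ m.+1 * eulerD A *+ m)).
  apply: dvdp_sub; apply: dvdp_mull; [exact: cauchy_asinh_poly | exact: eulerD_cauchy_poly_exp].
by rewrite /euler_shift /dasinh_poly exprS; ring.
Qed.

Lemma cauchy_raise_pow m :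
  'X^(N.+1) %| cauchy_raise m (g ^+ m.+1 * B *+ m) - g ^+ m.+2 *+ (m * m.+1).
Proof.
rewrite (_ : _ - _ = g ^+ m.+2 *+ (m * m.+1) * (B ^+ 2 * (1 + 'X) - 1)
    - g ^+ m.+1 * (1 + 'X) * B *+ (m * m.+1) * (g * A - 1)
    - (1 + 'X) * B *+ (2 * m) * (eulerD (g ^+ m.+1) + g ^+ m.+2 * eulerD A *+ m.+1)
    - g ^+ m.+1 *+ m * ((1 + 'X) * eulerD B *+ 2 + 'X * B)).
  apply: dvdp_sub; [apply: dvdp_sub; [apply: dvdp_sub|]|]; apply: dvdp_mull.
  - exact: dasinh_poly_sqr.
  - exact: cauchy_asinh_poly.
  - exact: eulerD_cauchy_poly_exp.
  - exact: dasinh_poly_ode.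
by rewrite /cauchy_raise (raddfMn (@eulerD _)) /= eulerDM /dasinh_poly !exprS; ring.
Qed.

Lemma cauchy_op_pow m :
  'X^(N.+1) %| cauchy_op m (g ^+ m) - g ^+ m.+2 *+ (m * m.+1).
Proof.
apply: dvdp_sub_trans (cauchy_raise_pow m).
by rewrite /cauchy_op -raddfB; apply/dvdXn_cauchy_raise/euler_shift_cauchy_pow.
Qed.

Lemma cauchy_iter_pow r :
  'X^(N.+1) %| cauchy_iter r g - g ^+ r.*2.+1 *+ (r.*2)`!.
Proof.
elim: r => [|r IHr] /=; first by rewrite expr1 mulr1n subrr dvdp0.
apply: (dvdp_sub_trans (q := cauchy_op r.*2.+1 (g ^+ r.*2.+1) *+ (r.*2)`!)).
  by rewrite -raddfMn -raddfB; apply: dvdXn_cauchy_op.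
have := dvdp_mulrn (r.*2)`! (cauchy_op_pow r.*2.+1).
by rewrite mulrnBl -mulrnA doubleS !factS mulnA [(r.*2.+2 * _)%N]mulnC.
Qed.

End TruncatedSeries.

Lemma coef_cauchy_poly_exp k n : (cauchy_poly n ^+ k)`_n =
  \sum_(i : {ffun 'I_k -> 'I_n.+1} | (\sum_(j < k) (i j : nat))%N == n)
     \prod_(j < k) inv_coef (i j).
Proof.
rewrite -[k in LHS]card_ord -prodr_const /cauchy_poly poly_def.
rewrite bigA_distr_bigA coef_sum [RHS]big_mkcond /=; apply: eq_bigr => i _.
rewrite (eq_bigr (fun j => (inv_coef (i j))%:P * 'X^(i j))) => [|j _]; last first.
  by rewrite mul_polyC.
rewrite big_split /= prodrXr -rmorph_prod coefCM coefXn eq_sym.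
by case: eqP; rewrite ?mulr1 ?mulr0.
Qed.

Lemma conv_pow_cauchy_poly k n :
  conv_pow k n = ((2 * n)`!)%:R * (cauchy_poly n ^+ k)`_n.
Proof.
rewrite coef_cauchy_poly_exp mulr_sumr; apply: eq_bigr => i _.
rewrite /C2 big_split /= -natr_prod.
have : (\prod_(j < k) (2 * i j)`!)%:R != 0 :> rat.
  by rewrite pnatr_eq0 -lt0n; apply/prodn_gt0 => j; apply: fact_gt0.
by move=> ?; field.
Qed.

Lemma natr_bin a k : 'C(a, k)%:R = (a ^_ k)%:R / (k`!)%:R :> rat.
Proof. by rewrite -bin_ffact natrM mulfK // pnatr_eq0 -lt0n fact_gt0. Qed.

Theorem mainTheorem9 (n : nat) : (3 <= n)%N ->
  conv_pow 7 n =
    ('C(2 * n - 1, 6))%:R * C2 n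
  + (12 * n%:R ^+ 2 - 60 * n%:R + 83) / 15
      * ('C(2 * n, 2))%:R * ('C(2 * n - 3, 4))%:R * C2 (n - 1)
  + (4 * n%:R ^+ 2 - 24 * n%:R + 39) * (12 * n%:R ^+ 2 - 72 * n%:R + 109) / 15
      * ('C(2 * n, 4))%:R * ('C(2 * n - 5, 2))%:R * C2 (n - 2)
  + ('C(2 * n, 6))%:R * (2 * n%:R - 7) ^+ 6 * C2 (n - 3) :> rat.
Proof.
case: n => [|[|[|m]]] // _; set g := cauchy_poly m.+3.
have /dvdXnP/(_ m.+3 (ltnSn _)) := cauchy_iter_pow m.+3 3.
rewrite coefB coefMn => /subr0_eq iter3E.
rewrite conv_pow_cauchy_poly (_ : (g ^+ 7)`_m.+3 = (cauchy_iter 3 g)`_m.+3 / 720); last first.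
  by rewrite iter3E -[_ *+ _]mulr_natr mulfK.
rewrite [cauchy_iter _ _]/= !coef_cauchy_op !coef_cauchy_poly; [| lia..].
rewrite !mulnS !addSn !add0n /C2 !subSS !subn0 !mulnS !addSn !add0n.
rewrite !natr_bin !ffactSS !ffactn0 !factS fact0 !natrM -!natr1.
by field.
Qed.
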